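(* Let $\mathcal{P}=(\Xi,\Omega,(\mathcal{M},d),\Lambda)$ be an SCI problem with countable $\Lambda=\{f_n\}_{n\in\mathbb{N}}$ satisfying consistency, let $\delta_\mathcal{M}$ be a representation of $\mathcal{M}$, and let $\mathcal{R}$ be a class of partial functionals $\subseteq\mathbb{N}^\mathbb{N}\to\mathbb{N}^\mathbb{N}$ with the following $\lim$-normal-form property: for every single-valued problem $f$ between represented spaces and every $k\in\mathbb{N}_0$, $f\le_{\mathrm W}^{\mathcal{R}}\lim^{(k)}$ holds if and only if there exists $K\in\mathcal{R}$ with $\lim^{(k)}\circ K\preceq f$. Then $\mathrm{SCI}_{A,\mathcal{R}}(\mathcal{P})=\mathrm{rank}_{\mathcal{R}}(\widehat\Xi)$.
   Context: Consistency: $\Xi(A)\neq\Xi(B)$ implies $f(A)\neq f(B)$ for some $f\in\Lambda$. $\mathrm{Ev}_\Lambda(A):=(f_n(A))_{n}\in\mathbb{C}^\mathbb{N}$, $I_\Lambda:=\mathrm{Ev}_\Lambda(\Omega)$ carries the subspace representation $\delta_{I_\Lambda}$ of the product of Cauchy representations of $\mathbb{C}$; $\widehat\Xi:I_\Lambda\to\mathcal{M}$ is the unique map with $\widehat\Xi\circ\mathrm{Ev}_\Lambda=\Xi$, viewed as a single-valued map $(I_\Lambda,\delta_{I_\Lambda})\to(\mathcal{M},\delta_\mathcal{M})$. $\lim$ is the limit operator on Baire space ($\lim(p)(k)=\lim_n p(\langle n,k\rangle)$, defined when each such sequence is eventually constant), $\lim^{(0)}=\mathrm{id}$, $\lim^{(k+1)}=\lim\circ\lim^{(k)}$.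 For a single-valued $f:\subseteq X\to Y$ between represented spaces, $\lim^{(k)}\circ K\preceq f$ means: for every name $p\in\mathrm{dom}(\delta_X)$ of a point $x\in\mathrm{dom}(f)$, $K(p)\in\mathrm{dom}(\lim^{(k)})$ and $\delta_Y(\lim^{(k)}(K(p)))=f(x)$. $f\le_{\mathrm W}^{\mathcal{R}}g$ means there exist $H,K\in\mathcal{R}$ such that for every realizer $G$ of $g$, $p\mapsto K(\langle p,G(H(p))\rangle)$ realizes $f$. $\mathrm{rank}_{\mathcal{R}}(f):=\min\{k\in\mathbb{N}_0:f\le_{\mathrm W}^{\mathcal{R}}\lim^{(k)}\}$ (or $\infty$). $\mathcal{P}$ has a pure $\mathcal{R}$-$\lim$-tower of height $k$ if there exists $K\in\mathcal{R}$ with $\lim^{(k)}\circ K\preceq\widehat\Xi$; $\mathrm{SCI}_{A,\mathcal{R}}(\mathcal{P})$ is the least such $k$, or $\infty$. *)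

From Stdlib Require Import Reals QArith ZArith Arith Cantor ClassicalEpsilon.

Definition Baire := nat -> nat.
Definition PFun := Baire -> option Baire.

Definition npair (n k : nat) : nat := Cantor.to_nat (n, k).

Definition bpair (p q : Baire) : Baire :=
  fun m => if Nat.even m then p (Nat.div2 m) else q (Nat.div2 m).

(** A representation of a type X: a (partial) naming relation
    [name p x] meaning "delta(p) = x". *)
Definition naming (X : Type) := Baire -> X -> Prop.

Definition is_rep {X : Type} (name : naming X) : Prop :=
  (forall p x x', name p x -> name p x' -> x = x') /\
  (forall x, exists p, name p x).

(** (Partial) problems as relations; dom f = {x | exists y, f x y}. *)
Definition single_valued {X Y : Type} (f : X -> Y -> Prop) : Prop :=
  forall x y y', f x y -> f x y' -> y = y'.

Definition realizes {X Y : Type} (nX : naming X) (nY : naming Y)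
  (f : X -> Y -> Prop) (G : PFun) : Prop :=
  forall p x, nX p x -> (exists y, f x y) ->
    exists q y, G p = Some q /\ nY q y /\ f x y.

Definition WeihR (R : PFun -> Prop)
  {X Y Z W : Type} (nX : naming X) (nY : naming Y) (f : X -> Y -> Prop)
  (nZ : naming Z) (nW : naming W) (g : Z -> W -> Prop) : Prop :=
  exists H K, R H /\ R K /\
    forall G : PFun, realizes nZ nW g G ->
      realizes nX nY f
        (fun p => match H p with
                  | Some h => match G h with
                              | Some r => K (bpair p r)
                              | None => None end
                  | None => None end).

Definition lim_rel (p q : Baire) : Prop :=
  forall k, exists N, forall n, (N <= n)%nat -> p (npair n k) = q k.

Fixpoint limk (k : nat) (p q : Baire) : Prop :=
  match k with
  | O => p = q
  | S k' => exists r, limk k' p r /\ lim_rel r q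
  end.

Definition baire_name : naming Baire := fun p q => p = q.

Definition tower_pre {X Y : Type} (nX : naming X) (nY : naming Y)
  (f : X -> Y -> Prop) (k : nat) (K : PFun) : Prop :=
  forall p x, nX p x -> (exists y, f x y) ->
    exists q r y, K p = Some q /\ limk k q r /\ nY r y /\ f x y.

(** min { k | P k } in N_0, or None (= infinity) if no such k. *)
Definition minN (P : nat -> Prop) : option nat :=
  epsilon (inhabits None)
    (fun o : option nat => match o with
       | Some k => P k /\ forall j, P j -> (k <= j)%nat
       | None => forall k, ~ P k end).

Definition rankR (R : PFun -> Prop) {X Y : Type} (nX : naming X)
  (nY : naming Y) (f : X -> Y -> Prop) : option nat :=
  minN (fun k => WeihR R nX nY f baire_name baire_name (limk k)).

Definition Cx := (R * R)%type.

Definition zdec (n : nat) : Z :=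
  if Nat.even n then Z.of_nat (Nat.div2 n) else (- Z.of_nat (Nat.div2 (S n)))%Z.

Definition qdec (n : nat) : Q :=
  let (a, b) := Cantor.of_nat n in Qmake (zdec a) (Pos.of_succ_nat b).

Definition gqdec (n : nat) : Cx :=
  let (a, b) := Cantor.of_nat n in (Q2R (qdec a), Q2R (qdec b)).

Definition cdist (z w : Cx) : R :=
  sqrt ((fst z - fst w)^2 + (snd z - snd w)^2)%R.

Definition cauchy_name : naming Cx :=
  fun p z => forall n, (cdist (gqdec (p n)) z <= (/ 2) ^ n)%R.

Definition prod_cauchy_name : naming (nat -> Cx) :=
  fun p z => forall n, cauchy_name (fun k => p (npair n k)) (z n).

Section SCI.
Context {Omega M : Type} (fs : nat -> Omega -> Cx) (Xi : Omega -> M).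

Definition consistent : Prop :=
  forall A B : Omega, Xi A <> Xi B -> exists n, fs n A <> fs n B.

Definition Ev (A : Omega) : nat -> Cx := fun n => fs n A.

Definition ILam : Type := { x : nat -> Cx | exists A, Ev A = x }.

Definition ILam_name : naming ILam := fun p x => prod_cauchy_name p (proj1_sig x).

Definition Xihat : ILam -> M -> Prop :=
  fun x m => exists A, Ev A = proj1_sig x /\ Xi A = m.

Definition SCI_AR (R : PFun -> Prop) (nM : naming M) : option nat :=
  minN (fun k => exists K, R K /\ tower_pre ILam_name nM Xihat k K).
End SCI.

(** Both sides are [minN] of a predicate in [k]: "a pure [R]-[lim]-tower of
    height [k] for [Xihat] exists" and "[Xihat <=_W^R lim^(k)]".  The
    normal-form hypothesis makes these predicates equivalent as soon as its
    side conditions hold.  Consistency makes [Xihat] single-valued, and the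
    subspace representation of [I_Lambda] is a representation because a
    Cauchy name has at most one limit and the Gaussian rationals are dense in
    [C]. *)

From Stdlib Require Import Reals QArith ZArith Arith Cantor ClassicalEpsilon Lra Lia
  Classical PropExtensionality FunctionalExtensionality ProofIrrelevance.
Open Scope R_scope.

Lemma zdec_surjective (z : Z) : exists n, zdec n = z.
Proof.
  assert (zdec_even : forall m, zdec (2 * m) = Z.of_nat m).
  { intro m. unfold zdec. now rewrite Nat.even_mul, Nat.div2_double. }
  assert (zdec_odd : forall m, zdec (2 * m + 1) = (- Z.of_nat (S m))%Z).
  { intro m. unfold zdec. rewrite Nat.even_add, Nat.even_mul.
    replace (S (2 * m + 1)) with (2 * S m)%nat by lia.
    now rewrite Nat.div2_double. }
  destruct z as [|p|p].
  - exists 0%nat. exact (zdec_even 0%nat).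
  - exists (2 * Pos.to_nat p)%nat. now rewrite zdec_even, positive_nat_Z.
  - exists (2 * Nat.pred (Pos.to_nat p) + 1)%nat.
    now rewrite zdec_odd, Nat.succ_pred_pos, positive_nat_Z by lia.
Qed.

Lemma qdec_surjective (z : Z) (b : nat) :
  exists n, qdec n = Qmake z (Pos.of_succ_nat b).
Proof.
  destruct (zdec_surjective z) as [a Ha].
  exists (Cantor.to_nat (a, b)). unfold qdec.
  now rewrite Cantor.cancel_of_to, Ha.
Qed.

Lemma IZR_pos_of_succ_nat (b : nat) : IZR (Z.pos (Pos.of_succ_nat b)) = INR (S b).
Proof.
  now rewrite INR_IZR_INZ, <- (SuccNat2Pos.id_succ b), positive_nat_Z.
Qed.

Lemma qdec_dense (x : R) (k : nat) :
  exists n, Rabs (Q2R (qdec n) - x) <= (/ 2) ^ S k.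
Proof.
  set (D := INR (S (2 ^ S k))).
  assert (HD : 2 ^ S k <= D).
  { unfold D. rewrite S_INR, pow_INR. replace (INR 2) with 2 by (simpl; lra). lra. }
  assert (H2k : 0 < 2 ^ S k) by (apply pow_lt; lra).
  assert (HinvD : 0 < / D <= (/ 2) ^ S k).
  { rewrite pow_inv. split; [apply Rinv_0_lt_compat | apply Rinv_le_contravar]; lra. }
  destruct (archimed (x * D)) as [Hup1 Hup2].
  destruct (qdec_surjective (up (x * D)) (2 ^ S k)) as [n Hn].
  exists n. rewrite Hn. unfold Q2R. cbn [Qnum Qden].
  rewrite IZR_pos_of_succ_nat. fold D.
  replace (IZR (up (x * D)) * / D - x) with ((IZR (up (x * D)) - x * D) * / D)
    by (field; lra).
  rewrite Rabs_mult, Rabs_right, Rabs_right by lra.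
  nra.
Qed.

Lemma Rabs_fst_le_cdist (z w : Cx) : Rabs (fst z - fst w) <= cdist z w.
Proof.
  unfold cdist. rewrite <- sqrt_Rsqr_abs. apply sqrt_le_1_alt.
  unfold Rsqr. pose proof (pow2_ge_0 (snd z - snd w)). lra.
Qed.

Lemma Rabs_snd_le_cdist (z w : Cx) : Rabs (snd z - snd w) <= cdist z w.
Proof.
  unfold cdist. rewrite <- sqrt_Rsqr_abs. apply sqrt_le_1_alt.
  unfold Rsqr. pose proof (pow2_ge_0 (fst z - fst w)). lra.
Qed.

Lemma cdist_le_coords (z w : Cx) (e : R) : 0 <= e ->
  Rabs (fst z - fst w) <= e / 2 -> Rabs (snd z - snd w) <= e / 2 ->
  cdist z w <= e.
Proof.
  intros He H1 H2. unfold cdist. rewrite <- (sqrt_pow2 e He).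
  apply sqrt_le_1_alt.
  rewrite <- (pow2_abs (fst z - fst w)), <- (pow2_abs (snd z - snd w)).
  pose proof (Rabs_pos (fst z - fst w)). pose proof (Rabs_pos (snd z - snd w)).
  nra.
Qed.

Lemma gqdec_dense (z : Cx) (k : nat) : exists n, cdist (gqdec n) z <= (/ 2) ^ k.
Proof.
  destruct z as [x y].
  destruct (qdec_dense x k) as [a Ha]. destruct (qdec_dense y k) as [b Hb].
  exists (Cantor.to_nat (a, b)). unfold gqdec. rewrite Cantor.cancel_of_to.
  apply cdist_le_coords; simpl in *; [apply pow_le|..]; lra.
Qed.

Lemma Rabs_le_geometric_eq0 (a : R) : (forall n, Rabs a <= 2 * (/ 2) ^ n) -> a = 0.
Proof.
  intros Ha. destruct (Req_dec a 0) as [|Hneq]; [assumption|exfalso].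
  assert (Hpos : 0 < Rabs a / 2) by (pose proof (Rabs_pos_lt a Hneq); lra).
  destruct (pow_lt_1_zero (/ 2) ltac:(rewrite Rabs_right; lra) _ Hpos) as [N HN].
  specialize (HN N (Nat.le_refl N)). specialize (Ha N).
  rewrite Rabs_right in HN by (apply Rle_ge, pow_le; lra). lra.
Qed.

Lemma Rabs_sub_le_triangle (a x x' e : R) :
  Rabs (a - x) <= e -> Rabs (a - x') <= e -> Rabs (x - x') <= 2 * e.
Proof.
  intros Hx Hx'.
  replace (x - x') with (- (a - x) + (a - x')) by ring.
  eapply Rle_trans; [apply Rabs_triang|]. rewrite Rabs_Ropp. lra.
Qed.

Lemma cauchy_name_functional (p : Baire) (z z' : Cx) :
  cauchy_name p z -> cauchy_name p z' -> z = z'.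
Proof.
  unfold cauchy_name. intros Hz Hz'. destruct z as [x y], z' as [x' y'].
  f_equal; apply Rminus_diag_uniq, Rabs_le_geometric_eq0; intro n;
    specialize (Hz n); specialize (Hz' n).
  - apply (Rabs_sub_le_triangle (fst (gqdec (p n)))).
    + apply (Rle_trans _ _ _ (Rabs_fst_le_cdist _ (x, y)) Hz).
    + apply (Rle_trans _ _ _ (Rabs_fst_le_cdist _ (x', y')) Hz').
  - apply (Rabs_sub_le_triangle (snd (gqdec (p n)))).
    + apply (Rle_trans _ _ _ (Rabs_snd_le_cdist _ (x, y)) Hz).
    + apply (Rle_trans _ _ _ (Rabs_snd_le_cdist _ (x', y')) Hz').
Qed.

Lemma is_rep_cauchy_name : is_rep cauchy_name.
Proof.
  split; [exact cauchy_name_functional|].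
  intro z. apply (choice (fun k n => cdist (gqdec n) z <= (/ 2) ^ k)).
  intro k. apply gqdec_dense.
Qed.

Definition countable_prod_name {X : Type} (nX : naming X) : naming (nat -> X) :=
  fun p z => forall n, nX (fun k => p (npair n k)) (z n).

Lemma is_rep_countable_prod {X : Type} (nX : naming X) :
  is_rep nX -> is_rep (countable_prod_name nX).
Proof.
  intros [Hfun Hsurj]. split.
  - intros p z z' Hz Hz'. apply functional_extensionality. intro n.
    exact (Hfun _ _ _ (Hz n) (Hz' n)).
  - intro z. destruct (choice (fun n q => nX q (z n)) (fun n => Hsurj (z n)))
      as [q Hq].
    exists (fun m => let (n, k) := Cantor.of_nat m in q n k).
    intro n. unfold npair.
    replace (fun k => let (n', k') := Cantor.of_nat (Cantor.to_nat (n, k)) in q n' k')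
      with (q n) by (apply functional_extensionality; intro k;
                     now rewrite Cantor.cancel_of_to).
    apply Hq.
Qed.

Definition subspace_name {X : Type} (P : X -> Prop) (nX : naming X)
  : naming {x : X | P x} :=
  fun p x => nX p (proj1_sig x).

Lemma is_rep_subspace {X : Type} (P : X -> Prop) (nX : naming X) :
  is_rep nX -> is_rep (subspace_name P nX).
Proof.
  intros [Hfun Hsurj]. split.
  - intros p x x' Hx Hx'. apply eq_sig_hprop; [intros; apply proof_irrelevance|].
    exact (Hfun _ _ _ Hx Hx').
  - intros [x Px]. exact (Hsurj x).
Qed.

Lemma is_rep_ILam_name {Omega : Type} (fs : nat -> Omega -> Cx) :
  is_rep (ILam_name fs).
Proof.
  exact (is_rep_subspace _ _ (is_rep_countable_prod _ is_rep_cauchy_name)).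
Qed.

Lemma Xihat_single_valued {Omega M : Type} (fs : nat -> Omega -> Cx) (Xi : Omega -> M) :
  consistent fs Xi -> single_valued (Xihat fs Xi).
Proof.
  intros Hcons x m m' [A [HA <-]] [B [HB <-]].
  apply NNPP. intro Hneq.
  destruct (Hcons A B Hneq) as [n Hn]. apply Hn.
  change (Ev fs A n = Ev fs B n). now rewrite HA, HB.
Qed.

Lemma minN_ext (P Q : nat -> Prop) : (forall k, P k <-> Q k) -> minN P = minN Q.
Proof.
  intro HPQ. f_equal. apply functional_extensionality. intro k.
  apply propositional_extensionality, HPQ.
Qed.

Theorem mainTheorem16 (Omega M : Type) (fs : nat -> Omega -> Cx) (Xi : Omega -> M)
  (deltaM : naming M) (R : PFun -> Prop) :
  consistent fs Xi ->
  is_rep deltaM ->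
  (forall (X Y : Type) (nX : naming X) (nY : naming Y) (f : X -> Y -> Prop),
      is_rep nX -> is_rep nY -> single_valued f ->
      forall k : nat,
        WeihR R nX nY f baire_name baire_name (limk k) <->
        exists K, R K /\ tower_pre nX nY f k K) ->
  SCI_AR fs Xi R deltaM = rankR R (ILam_name fs) deltaM (Xihat fs Xi).
Proof.
  intros Hcons HdeltaM Hnormal_form.
  apply minN_ext. intro k. symmetry.
  apply Hnormal_form; [apply is_rep_ILam_name | exact HdeltaM |].
  exact (Xihat_single_valued fs Xi Hcons).
Qed.
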